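(* Let $m\geq 3$ and $n\geq 2$ be integers, let $C_m$ be the cycle of order $m$ and $H_n$ a graph of order $n$. Then $rvc(C_m\diamond H_n)=1$ if $m=3$, and $rvc(C_m\diamond H_n)=\lceil m/2\rceil$ if $m\geq 4$.
   Context: All graphs are finite, simple, connected and undirected. A rainbow vertex $k$-coloring of $G$ is a map $c:V(G)\to\{1,\dots,k\}$ such that every two vertices are joined by a path whose internal vertices all receive distinct colors; $rvc(G)$ is the least $k$ for which $G$ has one. For graphs $G_m$ (order $m$) and $H_n$ (order $n$) on disjoint vertex sets, the edge corona $G_m\diamond H_n$ is obtained from one copy of $G_m$ and $|E(G_m)|$ vertex-disjoint copies of $H_n$, one per edge of $G_m$, by joining both end vertices of the $j$-th edge of $G_m$ to every vertex of the $j$-th copy of $H_n$. *)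

From mathcomp Require Import all_boot.
Set Implicit Arguments. Unset Strict Implicit. Unset Printing Implicit Defensive.

Definition simple_graph (T : finType) (e : rel T) : Prop :=
  symmetric e /\ irreflexive e.

Definition connected_graph (T : finType) (e : rel T) : Prop :=
  forall x y : T, connect e x y.

Definition rainbow_vertex_coloring (T : finType) (e : rel T) (k : nat)
  (c : T -> 'I_k) : Prop :=
  forall x y : T, x != y ->
    exists q : seq T, path e x (rcons q y) && uniq (map c q).

Definition is_rvc (T : finType) (e : rel T) (k : nat) : Prop :=
  (exists c : T -> 'I_k, rainbow_vertex_coloring e c) /\
  (forall k' (c : T -> 'I_k'), rainbow_vertex_coloring e c -> k <= k').

Definition cycle_rel (m : nat) : rel 'I_m :=
  fun x y => (y == (x.+1 %% m) :> nat) || (x == (y.+1 %% m) :> nat).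

Arguments cycle_rel m : clear implicits.

Definition is_edge (T : finType) (e : rel T) (A : {set T}) : bool :=
  [exists x, exists y, e x y && (A == [set x; y])].

Definition edge_type (T : finType) (e : rel T) := {A : {set T} | is_edge e A}.

(* Vertex set of the edge corona G <> H: vertices of G, plus one copy of H
   per edge of G. *)
Definition corona_vertex (T U : finType) (e : rel T) : finType :=
  (T + (edge_type e * U))%type.

Definition edge_corona_rel (T U : finType) (e : rel T) (h : rel U)
  : rel (corona_vertex U e) :=
  fun v w =>
    match v, w with
    | inl x, inl y => e x y
    | inl x, inr (A, _) => x \in val A
    | inr (A, _), inl y => y \in val A
    | inr (A, u), inr (B, u') => (A == B) && h u u'
    end.

Arguments edge_corona_rel {T U} e h.

From mathcomp Require Import all_boot zify.
Set Implicit Arguments. Unset Strict Implicit. Unset Printing Implicit Defensive.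

(* Colour vertex j of C_m by j mod ceil(m/2) (with a single colour when m = 3)
   and every copy of H by one fixed colour.  Any two vertices are joined
   through an arc of at most floor(m/2) consecutive cycle vertices, and the
   colours along such an arc are pairwise distinct.

   Conversely, let d = floor(m/2).  The copies of H on the edges {i, i+1} and
   {i+d, i+d+1} are at distance d+1, so a path between them has at least d
   internal vertices: distances to a copy of H are 1-Lipschitz along edges.
   When m = 2d+1 is odd and only d colours are available, such a path has
   exactly d internal vertices, and the two distance functions pin it to the
   arc i+1, ..., i+d.  Hence every d consecutive cycle vertices get distinct
   colours, so the colouring is d-periodic; on a cycle of length 2d+1 this
   makes two adjacent vertices of a window share a colour. *)

Definition rainbow_connected (T : finType) (e : rel T) (k : nat) (c : T -> 'I_k)
    (x y : T) : Prop :=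
  exists q : seq T, path e x (rcons q y) && uniq (map c q).

Lemma rainbow_connected_sym (T : finType) (e : rel T) k (c : T -> 'I_k) x y :
  symmetric e -> rainbow_connected e c x y -> rainbow_connected e c y x.
Proof.
move=> e_sym [q /andP [pq uq]]; exists (rev q); rewrite map_rev rev_uniq uq andbT.
have := rev_path e x (rcons q y); rewrite last_rcons belast_rcons rev_cons => ->.
by rewrite (@eq_path _ _ e) // => a b; exact: e_sym.
Qed.

Lemma size_uniq_ord k (s : seq 'I_k) : uniq s -> size s <= k.
Proof. by move/card_uniqP <-; rewrite -[k in _ <= k]card_ord max_card. Qed.

Definition one_lipschitz (X : Type) (R : rel X) (F : X -> nat) : Prop :=
  forall u v, R u v -> F u <= (F v).+1 /\ F v <= (F u).+1.

Section LipschitzPaths.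
Variables (X : Type) (R : rel X) (F : X -> nat).
Hypothesis F_lip : one_lipschitz R F.

Lemma lipschitz_path x s : path R x s ->
  F (last x s) <= F x + size s /\ F x <= F (last x s) + size s.
Proof.
elim: s x => [|a s IH] x /=; first by rewrite !addn0.
by case/andP=> /F_lip [? ?] /IH [? ?]; split; lia.
Qed.

Lemma lipschitz_path_nth x s t : path R x s -> t < size s ->
  F (nth x s t) <= F x + t.+1 /\ F (nth x s t) <= F (last x s) + (size s - t.+1).
Proof.
elim: s x t => [|a s IH] x t //= /andP [/F_lip [? ?] pa].
case: t => [|t] ht /=; first by have [? ?] := lipschitz_path pa; split; lia.
have [? ?] := IH a t pa ht.
by rewrite (set_nth_default a x); [split; lia | lia].
Qed.

End LipschitzPaths.

Lemma rainbow_windows_periodic k (f : nat -> 'I_k) :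
  (forall s, uniq (map f (iota s k))) -> forall s, f (s + k) = f s.
Proof.
case: k f => [|k] f win s; first by rewrite addn0.
have fresh : f s \notin map f (iota s.+1 k) by case/andP: (win s).
have seen : f s \in map f (iota s.+1 k.+1).
  apply: contraT => unseen.
  have := @size_uniq_ord _ (f s :: map f (iota s.+1 k.+1)).
  by rewrite cons_uniq unseen win /= size_map size_iota ltnn => /(_ isT).
move: seen; have -> : iota s.+1 k.+1 = rcons (iota s.+1 k) (s + k.+1).
  by rewrite -cats1 -[k.+1]addn1 iotaD addn1 addSnnS.
by rewrite map_rcons mem_rcons inE (negbTE fresh) orbF => /eqP.
Qed.

Lemma no_rainbow_windows_odd k (f : nat -> 'I_k) : 1 < k ->
  (forall j, f (j + k.*2.+1) = f j) -> ~ (forall s, uniq (map f (iota s k))).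
Proof.
move=> k_gt1 f_per win; have per := rainbow_windows_periodic win.
have f_eq : f k.*2 = f k.*2.+1.
  by rewrite -[k.*2.+1]add0n f_per -addnn (per k) -(per 0) add0n.
have := nth_uniq (f 0) (i := 0) (j := 1) _ _ (win k.*2).
rewrite size_map size_iota => /(_ (ltnW k_gt1) k_gt1).
rewrite !(nth_map 0) ?size_iota ?nth_iota; try lia.
by rewrite addn0 addn1 f_eq eqxx.
Qed.

Lemma modn_lt_double x d : x < d.*2 -> x %% d = if x < d then x else x - d.
Proof.
move=> lt_x; case: ltnP => [/modn_small // | le_dx].
by rewrite -{1}(subnKC le_dx) modnDl modn_small //; lia.
Qed.

Section EdgeCoronaCycle.
Variable m : nat.
Hypothesis m_ge3 : 3 <= m.
Variables (U : finType) (h : rel U).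
Hypothesis h_sym : symmetric h.

Local Notation e := (cycle_rel m).
Local Notation T := (corona_vertex U e).
Local Notation E := (edge_corona_rel e h).
Local Notation diam := (m %/ 2).

Lemma m_gt0 : 0 < m. Proof. exact: leq_trans m_ge3. Qed.

Definition node (j : nat) : 'I_m := Ordinal (ltn_pmod j m_gt0).

Lemma nodeK (z : 'I_m) : node z = z.
Proof. by apply: val_inj; rewrite /= modn_small. Qed.

Lemma eq_node i j : i = j %[mod m] -> node i = node j.
Proof. by move=> eq_ij; apply: val_inj. Qed.

Lemma cycle_rel_succ j : e (node j) (node j.+1).
Proof. by rewrite /cycle_rel /= -[(j %% m).+1]addn1 modnDml addn1 eqxx. Qed.

Lemma cycle_rel_sym : symmetric e.
Proof. by move=> x y; rewrite /cycle_rel orbC. Qed.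

Lemma cycle_relE z z' : e z z' -> z' = node z.+1 \/ z = node z'.+1.
Proof. by case/orP => /eqP eq_z; [left | right]; apply: val_inj; rewrite /= eq_z. Qed.

Lemma cycle_edge_start (C : edge_type e) :
  exists j, (j < m) && (val C == [set node j; node j.+1]).
Proof.
case: C => A /= /existsP [x /existsP [y /andP [exy /eqP ->]]].
case: (cycle_relE exy) => ->; first by exists x; rewrite ltn_ord nodeK eqxx.
by exists y; rewrite ltn_ord nodeK setUC eqxx.
Qed.

Definition edge_start (C : edge_type e) : nat := xchoose (cycle_edge_start C).

Lemma mem_edge (C : edge_type e) z :
  (z \in val C) = (z == node (edge_start C)) || (z == node (edge_start C).+1).
Proof.
case/andP: (xchooseP (cycle_edge_start C)) => _ /eqP val_C.
by rewrite -[z \in val C]/(z \in (val C : {set _})) val_C in_set2.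
Qed.

Lemma edge_start_mem (C : edge_type e) : node (edge_start C) \in val C.
Proof. by rewrite mem_edge eqxx. Qed.

Lemma edge_end_mem (C : edge_type e) : node (edge_start C).+1 \in val C.
Proof. by rewrite mem_edge eqxx orbT. Qed.

Lemma is_edge_succ j : is_edge e [set node j; node j.+1].
Proof.
apply/existsP; exists (node j); apply/existsP; exists (node j.+1).
by rewrite cycle_rel_succ eqxx.
Qed.

Definition cycle_edge j : edge_type e := exist (is_edge e) _ (is_edge_succ j).

Lemma mem_cycle_edge j z : (z \in val (cycle_edge j)) = (z == node j) || (z == node j.+1).
Proof. exact: in_set2. Qed.

Lemma cycle_near a b :
  exists2 w, w <= diam & node b = node (a + w) \/ node a = node (b + w).
Proof.
wlog le_ab : a b / a %% m <= b %% m.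
  move=> near; case: (leqP (a %% m) (b %% m)) => [/near // | /ltnW /near [w le_w near_ba]].
  by exists w => //; case: near_ba => ?; [right | left].
have ltm x : x %% m < m by exact: ltn_pmod _ m_gt0.
case: (leqP (b %% m - a %% m) diam) => near.
  exists (b %% m - a %% m) => //; left; apply: eq_node.
  by rewrite -modnDml subnKC // modn_mod.
exists (m - (b %% m - a %% m)); first lia.
right; apply: eq_node; rewrite -modnDml.
have -> : b %% m + (m - (b %% m - a %% m)) = a %% m + m by have := ltm b; lia.
by rewrite modnDr modn_mod.
Qed.

Lemma eq_edge_start (A B : edge_type e) :
  node (edge_start A) = node (edge_start B) -> A = B.
Proof.
move=> eq_start; have eq_mod : edge_start A = edge_start B %[mod m].
  by have /(congr1 val) := eq_start.
have eq_end : node (edge_start A).+1 = node (edge_start B).+1.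
  by apply: eq_node; rewrite -addn1 -modnDml eq_mod modnDml addn1.
by apply: val_inj; apply/setP => z; rewrite !mem_edge eq_start eq_end.
Qed.

Lemma corona_sym : symmetric E.
Proof.
move=> [x|[A u]] [y|[B v]] //=; first exact: cycle_rel_sym.
by rewrite eq_sym h_sym.
Qed.

Definition corona_rvc := if m == 3 then 1 else m.+1 %/ 2.

Lemma corona_rvc_gt0 : 0 < corona_rvc.
Proof. by rewrite /corona_rvc; case: ifP => // _; lia. Qed.

Definition mod_coloring (v : T) : 'I_corona_rvc :=
  match v with
  | inl z => Ordinal (ltn_pmod z corona_rvc_gt0)
  | inr _ => Ordinal corona_rvc_gt0
  end.

Definition arc s w : seq T := [seq inl (node j) | j <- iota s w].

Lemma path_arc_to s w v :
  E (inl (node (s + w))) v -> path E (inl (node s)) (rcons (arc s.+1 w) v).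
Proof.
elim: w s => [|w IH] s /=; first by rewrite addn0 => ->.
by move=> Ev; rewrite cycle_rel_succ /=; apply: IH; rewrite addSnnS.
Qed.

Lemma path_arc_from v s w :
  E v (inl (node s)) -> path E v (rcons (arc s w) (inl (node (s + w)))).
Proof.
case: w => [|w] Ev /=; first by rewrite addn0 Ev.
by rewrite Ev /=; apply: path_arc_to; rewrite /= addnS cycle_rel_succ.
Qed.

Lemma mod_color_inj a b : a <= b < a + diam ->
  a %% m %% corona_rvc = b %% m %% corona_rvc -> a = b.
Proof.
move=> /andP [le_ab lt_ba]; rewrite /corona_rvc; case: ifP => [/eqP m3 | /eqP m_ne3].
  by move: lt_ba; rewrite m3; lia.
have -> : b = a + (b - a) by lia.
rewrite -modnDml; have := ltn_pmod a m_gt0; have : b - a < diam by lia.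
move: (a %% m) (b - a) => a' d lt_d lt_a'.
rewrite (@modn_lt_double (a' + d) m); last by lia.
have mod_half x : x < m -> x %% (m.+1 %/ 2) = if x < m.+1 %/ 2 then x else x - m.+1 %/ 2.
  by move=> lt_x; apply: modn_lt_double; lia.
case: ifP => wrap; rewrite !mod_half; try lia.
all: by repeat case: ifP; lia.
Qed.

Lemma arc_rainbow s w : w <= diam -> uniq (map mod_coloring (arc s w)).
Proof.
move=> le_w; rewrite -map_comp map_inj_in_uniq ?iota_uniq // => a b.
rewrite !mem_iota => /andP [? ?] /andP [? ?] /(congr1 val) /= eq_col.
by case: (leqP a b) => ?; [| apply/esym]; apply: mod_color_inj => //; lia.
Qed.

Local Notation rconn := (rainbow_connected E mod_coloring).

Lemma rconn_arc a w : 0 < w <= diam -> rconn (inl (node a)) (inl (node (a + w))).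
Proof.
case: w => // w /= le_w; exists (arc a.+1 w).
rewrite path_arc_to ?arc_rainbow //=; first lia.
by rewrite addnS cycle_rel_succ.
Qed.

Lemma node_shift_pos (a b : 'I_m) w : a != b -> node b = node (a + w) -> 0 < w.
Proof.
by case: w => // ne_ab; rewrite addn0 !nodeK => eq_ab; rewrite eq_ab eqxx in ne_ab.
Qed.

Lemma rconn_nodes (a b : 'I_m) : a != b -> rconn (inl a) (inl b).
Proof.
move=> ne_ab; have [w le_w [eq_b | eq_a]] := cycle_near a b.
  rewrite -(nodeK a) -(nodeK b) eq_b; apply: rconn_arc.
  by rewrite le_w (node_shift_pos ne_ab) // nodeK.
apply: rainbow_connected_sym corona_sym _.
rewrite -(nodeK a) -(nodeK b) eq_a; apply: rconn_arc.
by rewrite le_w (@node_shift_pos b a) 1?eq_sym // nodeK.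
Qed.

Lemma rconn_node_copy a (C : edge_type e) x : rconn (inl (node a)) (inr (C, x)).
Proof.
have [w le_w [eq_c | eq_a]] := cycle_near a (edge_start C).
  by exists (arc a.+1 w); rewrite path_arc_to ?arc_rainbow //= -eq_c edge_start_mem.
apply: rainbow_connected_sym corona_sym _; exists (arc (edge_start C) w).
by rewrite eq_a path_arc_from ?arc_rainbow //= edge_start_mem.
Qed.

Lemma edge_shift_pos (A B : edge_type e) w :
  A != B -> node (edge_start B) = node (edge_start A + w) -> 0 < w.
Proof.
by case: w => // ne_AB; rewrite addn0 => /eq_edge_start eq_BA; rewrite eq_BA eqxx in ne_AB.
Qed.

Lemma rconn_copies_shift (A B : edge_type e) u v w : A != B -> w <= diam ->
  node (edge_start B) = node (edge_start A + w) -> rconn (inr (A, u)) (inr (B, v)).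
Proof.
move=> ne_AB le_w eq_b; have := edge_shift_pos ne_AB eq_b.
case: w => // w in le_w eq_b * => _; exists (arc (edge_start A).+1 w.+1).
rewrite arc_rainbow // andbT /= edge_end_mem path_arc_to //=.
by rewrite addSnnS -eq_b edge_start_mem.
Qed.

Lemma rconn_copies (A B : edge_type e) u v :
  inr (A, u) != inr (B, v) :> T -> rconn (inr (A, u)) (inr (B, v)).
Proof.
case: (eqVneq A B) => [<- _ | ne_AB _].
  by exists [:: inl (node (edge_start A))]; rewrite /= !edge_start_mem.
have [w le_w [eq_b | eq_a]] := cycle_near (edge_start A) (edge_start B).
  exact: rconn_copies_shift eq_b.
apply: rainbow_connected_sym corona_sym _.
by apply: (rconn_copies_shift v u _ le_w eq_a); rewrite eq_sym.
Qed.

Lemma mod_coloring_rainbow : rainbow_vertex_coloring E mod_coloring.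
Proof.
move=> [a|[A u]] [b|[B v]] ne.
- by apply: rconn_nodes; apply: contraNneq ne => ->.
- by rewrite -(nodeK a); exact: rconn_node_copy.
- by apply: rainbow_connected_sym corona_sym _; rewrite -(nodeK b); exact: rconn_node_copy.
- exact: rconn_copies.
Qed.

Lemma diam_succ_lt : diam.+1 < m.
Proof. lia. Qed.

Definition offset (i : nat) (z : 'I_m) : nat := (z + (m - i)) %% m.

Lemma offset_lt i z : offset i z < m.
Proof. exact: ltn_pmod _ m_gt0. Qed.

Lemma offset_node i t : i <= m -> offset i (node (i + t)) = t %% m.
Proof.
move=> le_i; rewrite /offset /= modnDml.
have -> : i + t + (m - i) = t + m by lia.
by rewrite modnDr.
Qed.

Lemma offset_node0 i : i <= m -> offset i (node i) = 0.
Proof. by move=> le_i; rewrite /offset /= modnDml subnKC // modnn. Qed.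

Lemma node_offset i z : i <= m -> node (i + offset i z) = z.
Proof.
move=> le_i; apply: val_inj; rewrite /= modnDmr.
have -> : i + (z + (m - i)) = z + m by lia.
by rewrite modnDr modn_small.
Qed.

Lemma offset_succ i z : offset i (node z.+1) = (offset i (node z)).+1 %% m.
Proof.
rewrite /offset /= [in LHS]modnDml -[in RHS]addn1 modnDml -addnA modnDml.
by congr (_ %% m); lia.
Qed.

(* [edge_dist a o] is one more than the distance in C_m from vertex o to the
   edge {a, a+1}, for o, a.+1 < m. *)
Definition edge_dist (a o : nat) : nat :=
  (if o <= a then minn (a - o) (o + m - a - 1) else minn (o - a - 1) (m - o + a)).+1.

Lemma edge_dist_succ a o : a.+1 < m -> o < m ->
  edge_dist a o <= (edge_dist a (o.+1 %% m)).+1 /\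
  edge_dist a (o.+1 %% m) <= (edge_dist a o).+1.
Proof.
move=> lt_a lt_o; have -> : o.+1 %% m = if o.+1 < m then o.+1 else 0.
  case: ltnP => [lt_m | ge_m]; first exact: modn_small.
  have -> : o.+1 = m by lia.
  by rewrite modnn.
by rewrite /edge_dist; repeat case: ifP; lia.
Qed.

Lemma edge_dist_lipschitz a i z z' : a.+1 < m -> e z z' ->
  edge_dist a (offset i z) <= (edge_dist a (offset i z')).+1 /\
  edge_dist a (offset i z') <= (edge_dist a (offset i z)).+1.
Proof.
move=> lt_a /cycle_relE [] ->; rewrite offset_succ nodeK.
  exact: edge_dist_succ (offset_lt _ _).
by have [? ?] := edge_dist_succ lt_a (offset_lt i z').
Qed.

Lemma edge_dist_on_edge a i z : a.+1 < m -> i <= m ->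
  z \in val (cycle_edge (i + a)) -> edge_dist a (offset i z) = 1.
Proof.
move=> lt_a le_i; rewrite mem_cycle_edge => /orP [] /eqP ->.
  by rewrite offset_node // modn_small ?/edge_dist ?leqnn; lia.
by rewrite -addnS offset_node // modn_small ?/edge_dist ?ltnn; lia.
Qed.

(* [copy_dist a i v] is the distance in the corona from v to the copy of H
   attached to the edge {i+a, i+a+1}; vertices of C_m are measured by their
   offset from i. *)
Definition copy_dist (a i : nat) (v : T) : nat :=
  match v with
  | inl z => edge_dist a (offset i z)
  | inr (C, _) =>
      if C == cycle_edge (i + a) then 0
      else (minn (edge_dist a (offset i (node (edge_start C))))
                 (edge_dist a (offset i (node (edge_start C).+1)))).+1
  end.

Lemma copy_dist_lipschitz a i : a.+1 < m -> i <= m -> one_lipschitz E (copy_dist a i).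
Proof.
move=> lt_a le_i.
have copy_node (C : edge_type e) w z : z \in val C ->
    edge_dist a (offset i z) <= (copy_dist a i (inr (C, w))).+1 /\
    copy_dist a i (inr (C, w)) <= (edge_dist a (offset i z)).+1.
  move=> zC /=; case: eqP => [eq_C | _]; first by rewrite edge_dist_on_edge // -eq_C.
  have [? ?] := edge_dist_lipschitz i lt_a (cycle_rel_succ (edge_start C)).
  by move: zC; rewrite mem_edge => /orP [] /eqP ->; split; lia.
move=> [z|[C w]] [z'|[C' w']] /=.
- exact: edge_dist_lipschitz.
- exact: copy_node.
- by move/(copy_node _ w) => [? ?].
- by case/andP => /eqP <- _.
Qed.

Lemma copy_dist_gt a i (C : edge_type e) w b : C != cycle_edge (i + a) ->
  (forall z, z \in val C -> b <= edge_dist a (offset i z)) ->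
  b < copy_dist a i (inr (C, w)).
Proof.
move=> ne_C b_le /=; rewrite (negbTE ne_C).
by have := b_le _ (edge_start_mem C); have := b_le _ (edge_end_mem C); lia.
Qed.

Lemma cycle_edge_far_neq i : i <= m -> cycle_edge (i + diam) != cycle_edge i.
Proof.
move=> le_i; apply/eqP => eq_edges.
have := mem_cycle_edge i (node (i + diam).+1).
rewrite -eq_edges mem_cycle_edge eqxx orbT => /esym /orP [] /eqP /(congr1 (offset i)).
  by rewrite offset_node0 // -addnS offset_node // modn_small; lia.
by rewrite -addnS -[i.+1]addn1 !offset_node // !modn_small; lia.
Qed.

Lemma copy_dist_near_far i w : i <= m ->
  diam < copy_dist 0 i (inr (cycle_edge (i + diam), w)).
Proof.
move=> le_i; apply: copy_dist_gt; first by rewrite addn0 cycle_edge_far_neq.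
move=> z; rewrite mem_cycle_edge => /orP [] /eqP ->; rewrite -?addnS offset_node //.
  by rewrite modn_small /edge_dist; [case: ifP | ]; lia.
by rewrite modn_small /edge_dist; [case: ifP | ]; lia.
Qed.

Lemma copy_dist_far_near i w : i <= m ->
  diam < copy_dist diam i (inr (cycle_edge i, w)).
Proof.
move=> le_i; apply: copy_dist_gt; first by rewrite eq_sym cycle_edge_far_neq.
move=> z; rewrite mem_cycle_edge => /orP [] /eqP ->.
  by rewrite offset_node0 // /edge_dist; case: ifP; lia.
by rewrite -[i.+1]addn1 offset_node // modn_small /edge_dist; [case: ifP | ]; lia.
Qed.

Lemma far_copies_path_size i u v q : i <= m ->
  path E (inr (cycle_edge i, u)) (rcons q (inr (cycle_edge (i + diam), v))) ->
  diam <= size q.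
Proof.
move=> le_i /(lipschitz_path (@copy_dist_lipschitz 0 i (ltnW m_ge3) le_i)) [+ _].
have src : copy_dist 0 i (inr (cycle_edge i, u)) = 0 by rewrite /= addn0 eqxx.
rewrite last_rcons size_rcons src.
have := copy_dist_near_far v le_i.
by move=> /leq_trans lt_far /lt_far; rewrite add0n ltnS.
Qed.

Lemma far_copies_neq i u v : i <= m ->
  inr (cycle_edge i, u) != inr (cycle_edge (i + diam), v) :> T.
Proof.
move=> le_i; apply: contra_neq (cycle_edge_far_neq le_i) => -[eq_sets _].
exact: val_inj.
Qed.

Lemma rainbow_diam_le k (c : T -> 'I_k) (u : U) :
  rainbow_vertex_coloring E c -> diam <= k.
Proof.
move=> rc; have [q /andP [pq uq]] := rc _ _ (far_copies_neq u u (leq0n m)).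
apply: leq_trans (far_copies_path_size (leq0n m) pq) _.
by rewrite -(size_map c) size_uniq_ord.
Qed.

Section OddCycle.
Hypothesis m_odd : odd m.

Lemma edge_dist_sum o : o < m -> diam.+1 <= edge_dist 0 o + edge_dist diam o.
Proof. by move=> lt_o; rewrite /edge_dist; repeat case: ifP; lia. Qed.

Lemma edge_dist_pin o t : o < m -> 0 < t <= diam ->
  edge_dist 0 o <= t -> edge_dist diam o <= diam.+1 - t -> o = t.
Proof. by move=> lt_o t_bd; rewrite /edge_dist; repeat case: ifP; lia. Qed.

Lemma copy_dist_pin i t v : i <= m -> 0 < t <= diam ->
  copy_dist 0 i v <= t -> copy_dist diam i v <= diam.+1 - t -> v = inl (node (i + t)).
Proof.
move=> le_i t_bd; case: v => [z | [C w]] dist0 dist1.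
  by rewrite -(node_offset z le_i) (edge_dist_pin (offset_lt i z) t_bd dist0 dist1).
case: (eqVneq C (cycle_edge (i + 0))) => [eq_C | ne_C].
  by rewrite eq_C addn0 in dist1; have := leq_trans (copy_dist_far_near w le_i) dist1; lia.
case: (eqVneq C (cycle_edge (i + diam))) => [eq_C | ne_C'].
  by rewrite eq_C in dist0; have := leq_trans (copy_dist_near_far w le_i) dist0; lia.
move: dist0 dist1; rewrite /= (negbTE ne_C) (negbTE ne_C').
have [? ?] := @edge_dist_lipschitz 0 i _ _ (ltnW m_ge3) (cycle_rel_succ (edge_start C)).
have [? ?] := @edge_dist_lipschitz diam i _ _ diam_succ_lt (cycle_rel_succ (edge_start C)).
have := edge_dist_sum (offset_lt i (node (edge_start C))).
have := edge_dist_sum (offset_lt i (node (edge_start C).+1)).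
lia.
Qed.

Lemma far_copies_geodesic i u v q : i <= m ->
  path E (inr (cycle_edge i, u)) (rcons q (inr (cycle_edge (i + diam), v))) ->
  size q = diam -> q = arc i.+1 diam.
Proof.
move=> le_i pq size_q.
have src : copy_dist 0 i (inr (cycle_edge i, u)) = 0 by rewrite /= addn0 eqxx.
have dst : copy_dist diam i (inr (cycle_edge (i + diam), v)) = 0 by rewrite /= eqxx.
apply: (eq_from_nth (x0 := inr (cycle_edge i, u))); first by rewrite size_map size_iota.
move=> t; rewrite size_q => lt_t.
have lt_t' : t < size (rcons q (inr (cycle_edge (i + diam), v))).
  by rewrite size_rcons size_q ltnS ltnW.
have [d0 _] := lipschitz_path_nth (@copy_dist_lipschitz 0 i (ltnW m_ge3) le_i) pq lt_t'.
have [_ d1] := lipschitz_path_nth (copy_dist_lipschitz diam_succ_lt le_i) pq lt_t'.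
rewrite nth_rcons size_q lt_t last_rcons size_rcons size_q src dst !add0n in d0 d1.
rewrite (nth_map 0) ?size_iota // nth_iota // addSnnS.
by apply: copy_dist_pin d0 d1 => //; lia.
Qed.

Lemma rainbow_window (c : T -> 'I_diam) (u : U) i : i <= m ->
  rainbow_vertex_coloring E c -> uniq [seq c (inl (node j)) | j <- iota i.+1 diam].
Proof.
move=> le_i rc; have [q /andP [pq uq]] := rc _ _ (far_copies_neq u u le_i).
have size_q : size q = diam.
  by apply/eqP; rewrite eqn_leq (far_copies_path_size le_i pq) -(size_map c) size_uniq_ord.
by move: uq; rewrite (far_copies_geodesic le_i pq size_q) -map_comp.
Qed.

Lemma rainbow_odd_diam_lt k (c : T -> 'I_k) (u : U) : 4 < m ->
  rainbow_vertex_coloring E c -> diam < k.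
Proof.
move=> m_gt4 rc; rewrite ltn_neqAle (rainbow_diam_le u rc) andbT.
apply/eqP => eq_k; subst k; pose f j := c (inl (node j)).
apply: (@no_rainbow_windows_odd diam f); first lia.
  move=> j; rewrite /f (@eq_node _ j) //.
  have -> : diam.*2.+1 = m by lia.
  by rewrite modnDr.
move=> s; have win := rainbow_window u (ltnW (ltn_pmod (s + m.-1) m_gt0)) rc.
suff -> : map f (iota s diam) = map f (iota ((s + m.-1) %% m).+1 diam) by [].
have shift a : iota a diam = map (addn a) (iota 0 diam) by rewrite -iotaDl addn0.
rewrite (shift s) (shift _.+1) -!map_comp; apply/eq_map => t /=.
rewrite /f; congr (c (inl _)); apply: eq_node.
rewrite addSn -addnS modnDml; have -> : s + m.-1 + t.+1 = s + t + m by lia.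
by rewrite modnDr.
Qed.

End OddCycle.

End EdgeCoronaCycle.

Theorem theorem6 (m n : nat) (U : finType) (h : rel U) :
  3 <= m -> 2 <= n -> #|U| = n -> simple_graph h -> connected_graph h ->
  is_rvc (edge_corona_rel (cycle_rel m) h)
    (if m == 3 then 1 else (m.+1) %/ 2).
Proof.
move=> m_ge3 n_ge2 card_U [h_sym _] _.
have /card_gt0P [u _] : 0 < #|U| by rewrite card_U; lia.
split; first by eexists; exact: mod_coloring_rainbow.
move=> k c rc; have := rainbow_diam_le m_ge3 u rc.
case: eqP => [m3 | ne3]; first lia.
have [m_odd | m_even] := boolP (odd m); last lia.
have m_gt4 : 4 < m by lia.
by have := rainbow_odd_diam_lt m_ge3 m_odd u m_gt4 rc; lia.
Qed.
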